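(* Let $M=(E,\Delta)$ be a matroid of rank $r$ and let $M\times e$ denote its free coextension by a new element $e\notin E$. Then $$(-1)^{r+1}\chi_{M\times e}(-q)=(1+q)\,f_M(q).$$
   Context: For a matroid $M=(E,\Delta)$ of rank $r$ with rank function $\mathrm{rk}$: - The characteristic polynomial is $\chi_M(q)=\sum_{A\subseteq E}(-1)^{|A|}q^{r-\mathrm{rk}(A)}$. - The $f$-polynomial is $f_M(q)=\sum_{A\in\Delta}q^{r-|A|}=\sum_{i=0}^r f_iq^{r-i}$, where $f_i$ is the number of independent sets of size $i$. - The free extension of $M$ by $e\notin E$ is the matroid $M+e$ on $E\cup\{e\}$ whose independent sets are $\Delta\cup\{I\cup\{e\}: I\in\Delta,\ |I|\le r-1\}$. - The dual matroid $M^*$ on $E$ has as independent sets those $A\subseteq E$ with $\mathrm{rk}(E\setminus A)=r$. - The free coextension is $M\times e:=(M^*+e)^*$; it has rank $r+1$. *)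

From HB Require Import structures.
From mathcomp Require Import all_boot all_order all_algebra.
Set Implicit Arguments. Unset Strict Implicit. Unset Printing Implicit Defensive.
Import Order.TTheory GRing.Theory Num.Theory.

Section Matroids.
Variable T : finType.

Definition is_matroid (D : {set {set T}}) : bool :=
  [&& set0 \in D,
      [forall A in D, forall B : {set T}, (B \subset A) ==> (B \in D)] &
      [forall A in D, forall B in D,
         (#|A| < #|B|)%N ==> [exists x in B :\: A, x |: A \in D]]].

Definition mrank (D : {set {set T}}) (A : {set T}) : nat :=
  \max_(I in D | I \subset A) #|I|.

Definition mrk (D : {set {set T}}) : nat := mrank D [set: T].

Definition mdual (D : {set {set T}}) : {set {set T}} :=
  [set A | mrank D (~: A) == mrk D].

(* free extension by a new element e, modelled as None on the ground type option T *)
Definition free_ext (D : {set {set T}}) : {set {set option T}} :=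
  [set X : {set option T} |
     ([set x | Some x \in X] \in D) &&
     ((None \in X) ==> (#|[set x | Some x \in X]| < mrk D)%N)].

Definition charpoly (D : {set {set T}}) : {poly int} :=
  \sum_(A : {set T}) ((-1) ^+ #|A|) *: 'X^(mrk D - mrank D A).

Definition fpoly (D : {set {set T}}) : {poly int} :=
  \sum_(A in D) 'X^(mrk D - #|A|).

End Matroids.

Definition free_coext (T : finType) (D : {set {set T}}) : {set {set option T}} :=
  mdual (free_ext (mdual D)).

From HB Require Import structures.
From mathcomp Require Import all_boot all_order all_algebra.
From mathcomp Require Import zify ring.
Import Order.TTheory GRing.Theory Num.Theory.
Set Implicit Arguments. Unset Strict Implicit. Unset Printing Implicit Defensive.

(* The free coextension N := M x e lives on [option T], the new element e being
   [None].  Every subset of [option T] is uniquely [Some @: A] or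
   [None |: Some @: A] for some A ⊆ E, so the ranks of N are determined by:
     - A independent in M:  rk_N(A) = |A|  and  rk_N(A + e) = |A| + 1;
     - A dependent in M:    rk_N(A + e) = rk_N(A);
     - rk(N) = r + 1.
   Grouping the terms of chi_N over A and A + e, the dependent A cancel and
   each independent A contributes (-1)^|A| (q - 1) q^(r - |A|); substituting
   q := -q and multiplying by (-1)^(r+1) gives (1 + q) f_M(q). *)

Section RankFunction.
Variable U : finType.
Implicit Types (D : {set {set U}}) (A B I : {set U}).

Lemma mrank_ge D A I : I \in D -> I \subset A -> #|I| <= mrank D A.
Proof. by move=> ID IA; apply: (leq_bigmax_cond I); rewrite ID IA. Qed.

Lemma mrank_le D A k :
  (forall I, I \in D -> I \subset A -> #|I| <= k) -> mrank D A <= k.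
Proof. by move=> H; apply/bigmax_leqP => I /andP[]; exact: H. Qed.

Lemma mrank_witness D A : set0 \in D ->
  exists I, [/\ I \in D, I \subset A & #|I| = mrank D A].
Proof.
move=> D0; have P0 : (set0 \in D) && (set0 \subset A) by rewrite D0 sub0set.
case: (arg_maxnP (fun I => #|I|) (P := fun I => (I \in D) && (I \subset A)) P0).
move=> I /andP[ID IA] Imax.
exists I; split=> //; apply/eqP; rewrite eqn_leq mrank_ge //=.
by apply: mrank_le => J JD JA; apply: Imax; rewrite JD JA.
Qed.

Lemma mrank_le_card D A : mrank D A <= #|A|.
Proof. by apply: mrank_le => I _ IA; exact: subset_leq_card. Qed.

Lemma mrank_mono D A B : A \subset B -> mrank D A <= mrank D B.
Proof.
by move=> AB; apply: mrank_le => I ID IA; apply: mrank_ge (subset_trans IA AB).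
Qed.

Lemma mrank_le_mrk D A : mrank D A <= mrk D.
Proof. exact/mrank_mono/subsetT. Qed.

Lemma card_le_mrk D A : A \in D -> #|A| <= mrk D.
Proof. by move=> AD; apply: mrank_ge AD (subsetT A). Qed.

Lemma mrank_indep D A : A \in D -> mrank D A = #|A|.
Proof. by move=> AD; apply/eqP; rewrite eqn_leq mrank_le_card mrank_ge. Qed.

Lemma indep_of_mrank D A : set0 \in D -> mrank D A = #|A| -> A \in D.
Proof.
move=> D0 rkA; case: (mrank_witness A D0) => I [ID IA rkI].
suff -> : A = I by [].
by apply/eqP; rewrite eq_sym eqEcard IA rkI rkA leqnn.
Qed.

Lemma mdual_set0 D : set0 \in mdual D.
Proof. by rewrite inE setC0 eqxx. Qed.

End RankFunction.

Section Matroid.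
Variables (T : finType) (D : {set {set T}}).
Hypothesis hD : is_matroid D.
Implicit Types (A B C I : {set T}).

Lemma matroid_set0 : set0 \in D.
Proof. by case/and3P: hD. Qed.

Lemma matroid_subset A B : A \in D -> B \subset A -> B \in D.
Proof.
case/and3P: hD => _ /forall_inP hered _ AD.
by move/forallP: (hered A AD) => /(_ B) /implyP.
Qed.

Lemma matroid_augment A B : A \in D -> B \in D -> #|A| < #|B| ->
  exists2 x, x \in B :\: A & x |: A \in D.
Proof.
case/and3P: hD => _ _ /forall_inP aug AD BD ltAB.
move/forall_inP: (aug A AD) => /(_ B BD) /implyP /(_ ltAB).
by case/exists_inP => x; exists x.
Qed.

Lemma matroid_extend I A : I \in D -> I \subset A ->
  exists J, [/\ J \in D, I \subset J, J \subset A & #|J| = mrank D A].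
Proof.
move=> ID IA; have PI : [&& I \in D, I \subset I & I \subset A] by rewrite ID subxx IA.
have [J /and3P[JD IJ JA] Jmax] :=
  arg_maxnP (fun J => #|J|) (P := fun J => [&& J \in D, I \subset J & J \subset A]) PI.
exists J; split=> //; apply/eqP; rewrite eqn_leq mrank_ge //= leqNgt.
apply/negP; case: (mrank_witness A matroid_set0) => K [KD KA <-] ltJK.
case: (matroid_augment JD KD ltJK) => x /setDP[xK xJ] xJD.
have xJA : x |: J \subset A by rewrite subUset sub1set (subsetP KA) // JA.
have := Jmax (x |: J); rewrite xJD (subset_trans IJ (subsetUr _ _)) xJA.
by move=> /(_ isT) /=; rewrite cardsU1 xJ add1n ltnn.
Qed.

Lemma matroid_basis_of I : I \in D ->
  exists B, [/\ B \in D, I \subset B & #|B| = mrk D].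
Proof. by move=> ID; case: (matroid_extend ID (subsetT I)) => B [? ? _ ?]; exists B. Qed.

Lemma matroid_basis : exists2 B, B \in D & #|B| = mrk D.
Proof. by case: (matroid_basis_of matroid_set0) => B [? _ ?]; exists B. Qed.

Lemma mdual_compl_basis B : B \in D -> #|B| = mrk D -> ~: B \in mdual D.
Proof. by move=> BD cardB; rewrite inE setCK mrank_indep // cardB. Qed.

Lemma mdual_card C : C \in mdual D -> #|C| + mrk D <= #|T|.
Proof.
rewrite inE => /eqP rkC; have := mrank_le_card D (~: C).
by rewrite rkC; have := cardsC C; lia.
Qed.

Lemma mrk_mdual : mrk (mdual D) = #|T| - mrk D.
Proof.
apply/eqP; rewrite eqn_leq; apply/andP; split.
  by apply: mrank_le => C CD _; have := mdual_card CD; lia.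
case: matroid_basis => B BD cardB.
have := mrank_ge (mdual_compl_basis BD cardB) (subsetT _).
by have := cardsC B; rewrite cardB /mrk; lia.
Qed.

End Matroid.

Section OptionSets.
Variable T : finType.
Implicit Types (A B : {set T}) (X Y : {set option T}).

(* The element e of E + e is [None]; a subset X of E + e is determined by its
   trace on E together with whether it contains e. *)
Definition trace X : {set T} := [set x | Some x \in X].

Lemma trace_Some A : trace (Some @: A) = A.
Proof. by apply/setP => x; rewrite inE mem_imset //; exact: Some_inj. Qed.

Lemma trace_addNone A : trace (None |: Some @: A) = A.
Proof. by apply/setP => x; rewrite inE in_setU1 /= mem_imset //; exact: Some_inj. Qed.

Lemma None_notin_Some A : None \notin Some @: A.
Proof. by apply/imsetP => -[]. Qed.

Lemma card_Some A : #|Some @: A| = #|A|.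
Proof. exact/card_imset/Some_inj. Qed.

Lemma card_addNone A : #|None |: Some @: A| = #|A|.+1.
Proof. by rewrite cardsU1 None_notin_Some card_Some. Qed.

Lemma trace_subset X Y : X \subset Y -> trace X \subset trace Y.
Proof. by move=> XY; apply/subsetP => x; rewrite !inE => /(subsetP XY). Qed.

Lemma Some_trace X : None \notin X -> Some @: trace X = X.
Proof.
move=> NX; apply/setP => -[x|]; first by rewrite mem_imset ?inE //; exact: Some_inj.
by rewrite (negbTE NX) (negbTE (None_notin_Some _)).
Qed.

Lemma addNone_trace X : None \in X -> None |: Some @: trace X = X.
Proof.
move=> NX; apply/setP => -[x|]; last by rewrite NX in_setU1 eqxx.
by rewrite in_setU1 /= mem_imset ?inE //; exact: Some_inj.
Qed.

Lemma card_le_trace X : #|X| <= #|trace X|.+1.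
Proof.
case NX: (None \in X); first by rewrite -{1}(addNone_trace NX) card_addNone.
by rewrite -{1}(Some_trace (negbT NX)) card_Some.
Qed.

Lemma setC_Some A : ~: (Some @: A) = None |: Some @: (~: A).
Proof.
apply/setP => -[x|]; last by rewrite in_setC in_setU1 eqxx None_notin_Some.
by rewrite in_setC in_setU1 /= !mem_imset ?inE //; exact: Some_inj.
Qed.

Lemma setC_addNone A : ~: (None |: Some @: A) = Some @: (~: A).
Proof. by rewrite -[RHS]setCK setC_Some setCK. Qed.

Lemma sum_option_sets (R : nmodType) (F : {set option T} -> R) :
  (\sum_(X : {set option T}) F X
   = \sum_(A : {set T}) (F (Some @: A) + F (None |: Some @: A)))%R.
Proof.
rewrite big_split (bigID (fun X => None \notin X)) /=.
congr (_ + _)%R.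
  rewrite (reindex_onto (fun A => Some @: A) trace) => [|X]; last exact: Some_trace.
  by apply: eq_bigl => A; rewrite trace_Some eqxx None_notin_Some.
rewrite (reindex_onto (fun A => None |: Some @: A) trace) => [|X /negPn]; last first.
  exact: addNone_trace.
by apply: eq_bigl => A; rewrite trace_addNone setU11 eqxx.
Qed.

End OptionSets.

Section FreeCoextension.
Variables (T : finType) (D : {set {set T}}).
Hypothesis hD : is_matroid D.
Implicit Types (A B C J : {set T}) (X : {set option T}).
Local Notation r := (mrk D).
Local Notation Dd := (mdual D).
Local Notation F := (free_ext Dd).
Local Notation N := (free_coext D).

Lemma free_extE X :
  (X \in F) = (trace X \in Dd) && ((None \in X) ==> (#|trace X| < mrk Dd)).
Proof. by rewrite inE. Qed.

Lemma free_ext_Some C : C \in Dd -> Some @: C \in F.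
Proof. by move=> CD; rewrite free_extE trace_Some CD (negbTE (None_notin_Some _)). Qed.

Lemma free_ext_addNone C : C \in Dd -> #|C| < mrk Dd -> None |: Some @: C \in F.
Proof. by move=> CD ltC; rewrite free_extE trace_addNone CD setU11. Qed.

Lemma free_ext_set0 : set0 \in F.
Proof.
have -> : set0 = Some @: set0 :> {set option T} by rewrite imset0.
exact/free_ext_Some/mdual_set0.
Qed.

Lemma free_ext_card X : X \in F -> #|X| <= mrk Dd.
Proof.
rewrite free_extE => /andP[XD smallX]; have rkX := card_le_mrk XD.
case NX: (None \in X) in smallX *.
- by rewrite -(addNone_trace NX) card_addNone.
- by rewrite -(Some_trace (negbT NX)) card_Some.
Qed.

Lemma mrk_free_ext : mrk F = mrk Dd.
Proof.
apply/eqP; rewrite eqn_leq; apply/andP; split.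
  by apply: mrank_le => X XF _; exact: free_ext_card.
case: (mrank_witness [set: T] (mdual_set0 D)) => C [CD _ rkC].
by have := mrank_ge (free_ext_Some CD) (subsetT _); rewrite card_Some rkC.
Qed.

Lemma mrank_free_ext_Some B : mrank F (Some @: B) = mrank Dd B.
Proof.
apply/eqP; rewrite eqn_leq; apply/andP; split.
  apply: mrank_le => X XF XB.
  have NX : None \notin X by apply: contraNN (None_notin_Some B); exact: (subsetP XB).
  move: XF XB; rewrite -(Some_trace NX) free_extE trace_Some card_Some => /andP[XD _].
  by move/trace_subset; rewrite !trace_Some; exact: mrank_ge.
case: (mrank_witness B (mdual_set0 D)) => C [CD CB rkC].
by have := mrank_ge (free_ext_Some CD) (imsetS _ CB); rewrite card_Some rkC.
Qed.

Lemma coext_SomeE A : (Some @: A \in N) = (mrank F (None |: Some @: ~: A) == mrk Dd).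
Proof. by rewrite inE setC_Some mrk_free_ext. Qed.

Lemma coext_addNone A : (None |: Some @: A \in N) = (A \in D).
Proof.
rewrite inE setC_addNone mrank_free_ext_Some mrk_free_ext.
apply/eqP/idP => [rkA | AD].
  case: (mrank_witness (~: A) (mdual_set0 D)) => C [CD CA rkC].
  have cardC : #|~: C| = r.
    by have := cardsC C; have := mdual_card hD CD; rewrite rkC rkA mrk_mdual //; lia.
  have CcD : ~: C \in D.
    by apply: indep_of_mrank (matroid_set0 hD) _; move: CD; rewrite inE => /eqP ->.
  by apply: (matroid_subset hD CcD); rewrite subsetC.
case: (matroid_basis_of hD AD) => B [BD AB cardB].
apply/eqP; rewrite eqn_leq mrank_le_mrk /= mrk_mdual //.
have := mrank_ge (mdual_compl_basis BD cardB) (_ : ~: B \subset ~: A).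
by have := cardsC B; rewrite cardB setCS => ? /(_ AB); lia.
Qed.

Lemma coext_Some_of_coindep A C :
  C \in Dd -> C \subset ~: A -> mrk Dd <= #|C|.+1 -> Some @: A \in N.
Proof.
move=> CD CA bigC; rewrite coext_SomeE eqn_leq -{1}mrk_free_ext mrank_le_mrk /=.
case: (ltnP #|C| (mrk Dd)) => [ltC|geC].
  have := mrank_ge (free_ext_addNone CD ltC) (setUS _ (imsetS _ CA)).
  by rewrite card_addNone; exact: leq_trans.
have CsA : Some @: C \subset None |: Some @: ~: A.
  exact: subset_trans (imsetS _ CA) (subsetUr _ _).
by have := mrank_ge (free_ext_Some CD) CsA; rewrite card_Some; exact: leq_trans.
Qed.

Lemma coext_Some_add A x : A \in D -> Some @: (x |: A) \in N.
Proof.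
move=> AD; case: (matroid_basis_of hD AD) => B [BD AB cardB].
apply: (@coext_Some_of_coindep _ (~: (x |: B))).
- rewrite inE setCK eqn_leq mrank_le_mrk -cardB -(mrank_indep BD).
  exact/mrank_mono/subsetUr.
- by rewrite setCS setUS.
- rewrite mrk_mdual //; have := cardsC (x |: B); have := cardsU1 x B.
  by rewrite cardB; case: (x \in B) => /=; lia.
Qed.

Lemma coext_Some A : A \in D -> Some @: A \in N.
Proof.
move=> AD; case: (matroid_basis_of hD AD) => B [BD AB cardB].
apply: (@coext_Some_of_coindep _ (~: B) (mdual_compl_basis BD cardB)).
  by rewrite setCS.
by rewrite mrk_mdual //; have := cardsC B; rewrite cardB; lia.
Qed.

Lemma coext_Some_card A : Some @: A \in N -> #|A| <= r.+1.
Proof.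
rewrite coext_SomeE => /eqP rkA.
case: (mrank_witness (None |: Some @: ~: A) free_ext_set0) => X [_ XA rkX].
have YA : #|trace X| <= #|~: A|.
  by rewrite -[~: A]trace_addNone; exact/subset_leq_card/trace_subset.
have := card_le_trace X; have := cardsC A; have := mrank_le_card D [set: T].
by rewrite rkX rkA mrk_mdual // cardsT; lia.
Qed.

Local Notation rN := (mrank N).

Lemma mrank_coext_indep A : A \in D -> rN (Some @: A) = #|A|.
Proof. by move=> AD; rewrite mrank_indep ?card_Some // coext_Some. Qed.

Lemma mrank_coext_addNone_indep A : A \in D -> rN (None |: Some @: A) = #|A|.+1.
Proof. by move=> AD; rewrite mrank_indep ?coext_addNone // card_addNone. Qed.

(* For A dependent in M, adding e does not raise the rank in M x e: an
   independent Y + e ⊆ A + e may trade e for some x in A \ Y. *)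
Lemma mrank_coext_addNone_dep A :
  A \notin D -> rN (None |: Some @: A) = rN (Some @: A).
Proof.
move=> AnD; apply/eqP; rewrite eqn_leq andbC mrank_mono ?subsetUr //=.
apply: mrank_le => X XN XA; have YA := trace_subset XA; rewrite trace_addNone in YA.
case NX: (None \in X); last first.
  by apply: mrank_ge XN _; rewrite -(Some_trace (negbT NX)) imsetS.
move: XN; rewrite -(addNone_trace NX) coext_addNone card_addNone => YD.
have [x xA xY] : exists2 x, x \in A & x \notin trace X.
  apply/exists_inP; rewrite -negb_forall_in; apply: contra AnD => /forall_inP AY.
  by apply: (matroid_subset hD YD); apply/subsetP.
have := mrank_ge (coext_Some_add x YD) (imsetS _ (_ : x |: trace X \subset A)).
by rewrite card_Some cardsU1 xY; apply; rewrite subUset sub1set xA.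
Qed.

Lemma mrk_coext : mrk N = r.+1.
Proof.
apply/eqP; rewrite eqn_leq; apply/andP; split.
  apply: mrank_le => X XN _; case NX: (None \in X).
    move: XN; rewrite -(addNone_trace NX) coext_addNone card_addNone => YD.
    exact: card_le_mrk.
  by move: XN; rewrite -(Some_trace (negbT NX)) card_Some; exact: coext_Some_card.
case: (matroid_basis hD) => B BD <-.
by rewrite -card_addNone; apply: mrank_ge (subsetT _); rewrite coext_addNone.
Qed.

End FreeCoextension.

Local Open Scope ring_scope.

Lemma charpoly_free_coext (T : finType) (D : {set {set T}}) (hD : is_matroid D) :
  charpoly (free_coext D) =
  \sum_(A in D) (-1) ^+ #|A| *: (('X - 1) * 'X^(mrk D - #|A|)).
Proof.
rewrite /charpoly sum_option_sets (bigID (fun A => A \in D)) /=.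
rewrite [X in _ + X]big1 ?addr0 => [|A AnD]; last first.
  rewrite mrank_coext_addNone_dep // card_addNone card_Some.
  by rewrite exprS mulN1r scaleNr addrN.
apply: eq_bigr => A AD; rewrite mrk_coext // mrank_coext_indep //.
rewrite mrank_coext_addNone_indep // card_addNone card_Some subSS subSn; last first.
  exact: card_le_mrk.
by rewrite [(-1) ^+ _.+1]exprS mulN1r scaleNr exprS mulrBl mul1r scalerBr.
Qed.

(* The contribution of a single independent set after the substitution q := -q. *)
Lemma signed_term_comp (a k : nat) :
  (-1) ^+ (a + k).+1 *: (((-1) ^+ a *: (('X - 1) * 'X^k)) \Po (- 'X))
  = (1 + 'X) * 'X^k :> {poly int}.
Proof.
have sign_sq (n : nat) : (-1) ^+ n * (-1) ^+ n = 1 :> {poly int}.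
  by rewrite -expr2 sqrr_sign.
rewrite -!mul_polyC !comp_polyM comp_polyC comp_polyB comp_polyX comp_Xn_poly.
rewrite (comp_poly_is_monoid_morphism _).1 !rmorphXn /= rmorphN rmorph1.
rewrite exprS exprD (exprNn 'X k).
set u := (-1) ^+ a; set v := (-1) ^+ k.
transitivity (u * u * (v * v) * ((1 + 'X) * 'X^k)); first by ring.
by rewrite !sign_sq !mul1r.
Qed.

Theorem mainTheorem3 (T : finType) (D : {set {set T}}) (hD : is_matroid D) :
  (-1) ^+ (mrk D).+1 *: (charpoly (free_coext D) \Po (- 'X)) = (1 + 'X) * fpoly D.
Proof.
rewrite charpoly_free_coext // raddf_sum scaler_sumr /fpoly mulr_sumr.
apply: eq_bigr => A AD.
by rewrite -(subnKC (card_le_mrk AD)) addKn signed_term_comp.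
Qed.
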